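(* Let $\mathcal{N}$ be any set of arbitrary 2D nodes over an $N\times M$ matrix, and let $B\mapsto S_U(B)$ be any fixed assignment, to each submatrix $B$, of a set $S_U(B)\subseteq\mathcal{N}$ whose union equals $B$. For a submatrix $B$, let the set of nodes visited by the update on $B$ be $S_U(B)\cup\{m\in\mathcal{N}: m\cap n\neq\emptyset \text{ for some } n\in S_U(B),\ \text{and } m\not\subseteq n \text{ for every } n\in S_U(B)\}$. Then there exists a submatrix $B$ for which the update on $B$ visits at least $\frac{NM}{N+M}$ nodes.
   Context: The matrix has coordinate set $G=\{0,\dots,N-1\}\times\{0,\dots,M-1\}$; a submatrix $[x_0,x_1][y_0,y_1]$ is the set of $(x,y)$ with $x_0\le x\le x_1$, $y_0\le y\le y_1$. A set of arbitrary 2D nodes is a family $\mathcal{N}$ of nonempty subsets of $G$ (nodes; they need not be submatrices) such that no two nodes are the same subset and for every coordinate $(x,y)$ the singleton $\{(x,y)\}$ is a node. (In the associated update algorithm, the lazy values of the nodes of $S_U(B)$ are changed and the non-lazy values of the other visited nodes are recomputed.) *)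

From HB Require Import structures.
From mathcomp Require Import all_boot all_order all_algebra.
Set Implicit Arguments. Unset Strict Implicit. Unset Printing Implicit Defensive.
Import Order.TTheory GRing.Theory Num.Theory.

Definition mxcoord (N M : nat) : finType := ('I_N * 'I_M)%type.

Definition submx_set (N M x0 x1 y0 y1 : nat) : {set mxcoord N M} :=
  [set p : mxcoord N M | (x0 <= p.1 <= x1) && (y0 <= p.2 <= y1)].

Definition is_submatrix (N M : nat) (B : {set mxcoord N M}) : Prop :=
  exists x0 x1 y0 y1 : nat,
    [/\ x0 <= x1 < N, y0 <= y1 < M & B = submx_set N M x0 x1 y0 y1].

Definition arbitrary_2D_nodes (N M : nat) (nodes : {set {set mxcoord N M}}) : Prop :=
  set0 \notin nodes /\ forall p : mxcoord N M, [set p] \in nodes.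

Definition visited (N M : nat) (nodes S : {set {set mxcoord N M}}) :
  {set {set mxcoord N M}} :=
  S :|: [set m in nodes | [exists n in S, m :&: n != set0] &&
                          [forall n in S, ~~ (m \subset n)]].

(* Charge every cell p = (i, j) either to column j, when the singleton {p} is
   one of the nodes S_U (column j), or otherwise to row i: then the node of
   S_U (column j) containing p lies in column j, is not {p}, and so meets the
   row only at p; the update of row i therefore visits it without it being
   contained in a node of S_U (row i).  Distinct cells of a row give distinct
   such nodes, so the N + M updates of full rows and columns visit at least
   N * M nodes in total, and one of them visits at least N M / (N + M). *)

From mathcomp Require Import all_boot all_order all_algebra.
Import GRing.Theory Num.Theory.
Set Implicit Arguments. Unset Strict Implicit. Unset Printing Implicit Defensive.

Lemma exists_sum_leq_card_mul (I : finType) (a : I -> nat) :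
  0 < #|I| -> exists i, \sum_j a j <= #|I| * a i.
Proof.
move=> I_gt0; have [i max_i] := eq_bigmax a I_gt0.
exists i; rewrite -max_i -sum_nat_const.
by apply: leq_sum => j _; apply: leq_bigmax.
Qed.

Lemma card_bigcup_leq (I T : finType) (A : I -> {set T}) :
  #|\bigcup_i A i| <= \sum_i #|A i|.
Proof.
apply: (big_ind2 (fun (X : {set T}) n => #|X| <= n)) => //; first by rewrite cards0.
by move=> X m Y n leXm leYn; apply: leq_trans (leq_card_setU X Y) (leq_add leXm leYn).
Qed.

Definition cover_pick (T : finType) (S : {set {set T}}) (p : T) : {set T} :=
  odflt set0 [pick c in S | p \in c].

Lemma cover_pickP (T : finType) (S : {set {set T}}) (p : T) :
  p \in cover S -> cover_pick S p \in S /\ p \in cover_pick S p.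
Proof.
rewrite /cover_pick; case: pickP => [c /andP[] //|no_c].
by case/bigcupP=> c cS pc; move: (no_c c); rewrite cS pc.
Qed.

Section Visited.
Variables (N M : nat) (nodes S : {set {set mxcoord N M}}).

Lemma card_singletons_leq_visited (A : {set mxcoord N M}) :
  {in A, forall p, [set p] \in S} -> #|A| <= #|visited nodes S|.
Proof.
move=> AS; rewrite -(card_imset A set1_inj).
by apply/subset_leq_card/subsetP=> _ /imsetP[p pA ->]; rewrite inE AS.
Qed.

Lemma mem_visited_cross (R C m : {set mxcoord N M}) (p : mxcoord N M) :
  cover S = R -> R :&: C \subset [set p] -> m \in nodes -> m \subset C ->
  p \in m -> p \in R -> m != [set p] -> m \in visited nodes S.
Proof.
move=> coverS RC m_node mC pm pR m_neq.
rewrite inE; apply/orP; right; rewrite inE m_node /=; apply/andP; split.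
  move: pR; rewrite -coverS => /bigcupP[n nS pn].
  by apply/exists_inP; exists n => //; apply/set0Pn; exists p; rewrite inE pm.
apply/forall_inP=> n nS; apply: contra m_neq => mn.
have mR : m \subset R by rewrite -coverS (subset_trans mn) // bigcup_sup.
by rewrite eqEsubset sub1set pm andbT (subset_trans _ RC) // subsetI mR.
Qed.

End Visited.

Definition row_cells (N M : nat) (i : 'I_N) : {set mxcoord N M} :=
  submx_set N M i i 0 M.-1.

Definition col_cells (N M : nat) (j : 'I_M) : {set mxcoord N M} :=
  submx_set N M 0 N.-1 j j.

Definition line_cells (N M : nat) (l : 'I_N + 'I_M) : {set mxcoord N M} :=
  match l with inl i => row_cells M i | inr j => col_cells N j end.

Lemma mem_row_cells (N M : nat) (i : 'I_N) (p : mxcoord N M) :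
  (p \in row_cells M i) = (p.1 == i).
Proof.
case: p => a b; rewrite inE /= -eqn_leq eq_sym.
by rewrite -ltnS prednK ?ltn_ord ?andbT // (leq_trans _ (ltn_ord b)).
Qed.

Lemma mem_col_cells (N M : nat) (j : 'I_M) (p : mxcoord N M) :
  (p \in col_cells N j) = (p.2 == j).
Proof.
case: p => a b; rewrite inE /= -eqn_leq eq_sym.
by rewrite -ltnS prednK ?ltn_ord // (leq_trans _ (ltn_ord a)).
Qed.

Lemma row_col_cellsI (N M : nat) (i : 'I_N) (j : 'I_M) :
  row_cells M i :&: col_cells N j = [set (i, j)].
Proof.
apply/setP=> -[a b]; rewrite inE mem_row_cells mem_col_cells !inE.
by rewrite xpair_eqE.
Qed.

Lemma line_cells_submatrix (N M : nat) (l : 'I_N + 'I_M) :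
  0 < N -> 0 < M -> is_submatrix (line_cells l).
Proof.
move=> N_gt0 M_gt0; case: l => [i|j].
  by exists i, i, 0, M.-1; rewrite leqnn ltn_ord prednK ?leqnn.
by exists 0, N.-1, j, j; rewrite leqnn ltn_ord prednK ?leqnn.
Qed.

Section Charging.
Variables (N M : nat) (nodes : {set {set mxcoord N M}}).
Variable S_U : {set mxcoord N M} -> {set {set mxcoord N M}}.
Hypothesis S_U_sub_line : forall l, S_U (line_cells l) \subset nodes.
Hypothesis S_U_cover_line : forall l, cover (S_U (line_cells l)) = line_cells l.

Definition charged_cells (l : 'I_N + 'I_M) : {set mxcoord N M} :=
  match l with
  | inl i => [set p in row_cells M i | [set p] \notin S_U (col_cells N p.2)]
  | inr j => [set p in col_cells N j | [set p] \in S_U (col_cells N j)]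
  end.

Lemma charged_cells_cover : \bigcup_l charged_cells l = [set: mxcoord N M].
Proof.
apply/setP=> p; rewrite inE; apply/bigcupP.
case: (boolP ([set p] \in S_U (col_cells N p.2))) => p_single.
  by exists (inr p.2); rewrite // inE mem_col_cells eqxx.
by exists (inl p.1); rewrite // inE mem_row_cells eqxx.
Qed.

Lemma card_charged_leq_visited (l : 'I_N + 'I_M) :
  #|charged_cells l| <= #|visited nodes (S_U (line_cells l))|.
Proof.
case: l => [i|j] /=; last first.
  by apply: card_singletons_leq_visited => p; rewrite inE => /andP[].
have cover_col j : cover (S_U (col_cells N j)) = col_cells N j := S_U_cover_line (inr j).
pose f p := cover_pick (S_U (col_cells N p.2)) p.
have fP p : f p \in S_U (col_cells N p.2) /\ p \in f p.
  by apply: cover_pickP; rewrite cover_col mem_col_cells.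
have f_sub p : f p \subset col_cells N p.2 by rewrite -cover_col; apply: bigcup_sup (fP p).1.
have f_inj : {in charged_cells (inl i) &, injective f}.
  move=> p q /setIdP[pi _] /setIdP[qi _] fpq.
  have pq2 : p \in col_cells N q.2 by rewrite (subsetP (f_sub q)) // -fpq (fP p).2.
  have : q \in [set (i, q.2)] by rewrite -row_col_cellsI inE qi mem_col_cells eqxx.
  have : p \in [set (i, q.2)] by rewrite -row_col_cellsI inE pi pq2.
  by rewrite !inE => /eqP -> /eqP ->.
rewrite -(card_in_imset f_inj).
apply/subset_leq_card/subsetP=> _ /imsetP[p /setIdP[pi p_nsingle] ->].
have ip : (i, p.2) = p by move: pi; rewrite mem_row_cells => /eqP <-; case: p {p_nsingle}.
apply: (mem_visited_cross (R := row_cells M i) (C := col_cells N p.2)).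
- exact: (S_U_cover_line (inl i)).
- by rewrite row_col_cellsI ip.
- exact: (subsetP (S_U_sub_line (inr p.2)) _ (fP p).1).
- exact: f_sub.
- exact: (fP p).2.
- exact: pi.
- by apply: contraNneq p_nsingle => <-; apply: (fP p).1.
Qed.

Lemma sum_card_visited_lines :
  N * M <= \sum_l #|visited nodes (S_U (line_cells l))|.
Proof.
have -> : N * M = #|[set: mxcoord N M]| by rewrite cardsT card_prod !card_ord.
rewrite -charged_cells_cover (leq_trans (card_bigcup_leq _)) //.
by apply: leq_sum => l _; apply: card_charged_leq_visited.
Qed.

End Charging.

Local Open Scope ring_scope.

Theorem theorem4 (N M : nat) (hN : (0 < N)%N) (hM : (0 < M)%N)
  (nodes : {set {set mxcoord N M}})
  (Hnodes : arbitrary_2D_nodes nodes)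
  (S_U : {set mxcoord N M} -> {set {set mxcoord N M}})
  (HS_sub : forall B, is_submatrix B -> S_U B \subset nodes)
  (HS_cover : forall B, is_submatrix B -> cover (S_U B) = B) :
  exists B : {set mxcoord N M}, is_submatrix B /\
    ((N * M)%:R / (N + M)%:R : rat) <= (#|visited nodes (S_U B)|)%:R.
Proof.
have lines_gt0 : (0 < #|{: 'I_N + 'I_M}|)%N by rewrite card_sum !card_ord addn_gt0 hN.
have [l l_max] := exists_sum_leq_card_mul
  (fun l => #|visited nodes (S_U (line_cells l))|) lines_gt0.
rewrite card_sum !card_ord in l_max.
have line_sub l := line_cells_submatrix l hN hM.
exists (line_cells l); split; first exact: line_sub.
rewrite ler_pdivrMr ?ltr0n ?addn_gt0 ?hN // -natrM ler_nat [X in (_ <= X)%N]mulnC.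
apply: leq_trans l_max.
exact: sum_card_visited_lines (fun l => HS_sub _ (line_sub l))
                              (fun l => HS_cover _ (line_sub l)).
Qed.
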